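(* Let $b\ge2$ be an integer and let $D$ be a nonempty subset of $\{-[\frac b2],-[\frac b2]+1,\ldots,b-1-[\frac b2]\}$. Let $(D_i)_{i\ge1}$ be a sequence with $D_i=D$ or $D_i=\{0\}$ for each $i$, and define $$\Lambda(b,D):=\bigcup_{k=1}^\infty\left\{\sum_{i=1}^k b^{i-1}d_i: d_i\in D_i\text{ for }1\le i\le k\right\}.$$ Then $$\dim_{Be}\Lambda(b,D)=\limsup_{n\to\infty}\frac{\#\{i:D_i=D,\ 1\le i\le n\}}{n}\cdot\frac{\log\#D}{\log b}.$$
   Context: $[x]$ is the integer part of $x$. For countable $\Lambda\subseteq\mathbb{R}^d$ and $r>0$, $D_r^+(\Lambda)=\limsup_{h\to\infty}\sup_{x\in\mathbb{R}^d}\#(\Lambda\cap B(x,h))/h^r$ ($B(x,h)$ the open ball), and the Beurling dimension is $\dim_{Be}(\Lambda)=\inf\{r:D_r^+(\Lambda)=0\}$. *)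

From HB Require Import structures.
From mathcomp Require Import all_boot all_order all_algebra.
From mathcomp Require Import finmap.
From mathcomp Require Import all_classical all_reals all_analysis.
Set Implicit Arguments. Unset Strict Implicit. Unset Printing Implicit Defensive.
Import Order.TTheory GRing.Theory Num.Theory.
Import numFieldNormedType.Exports.
Local Open Scope classical_set_scope.
Local Open Scope ring_scope.
Local Open Scope ereal_scope.

Definition ball_count (R : realType) (Lam : set R) (x h : R) : \bar R :=
  \esum_(y in Lam `&` [set y | `|y - x| < h]%R) 1.

Definition upper_density (R : realType) (r : R) (Lam : set R) : \bar R :=
  limf_esup (fun h : R => ereal_sup [set ball_count Lam x h * ((h `^ r)^-1)%:E
                                     | x in [set: R]]) +oo%R.

Definition beurling_dim (R : realType) (Lam : set R) : \bar R :=
  ereal_inf [set r%:E | r in [set r : R | (0 < r)%R /\ upper_density r Lam = 0]].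

Definition Lambda_bD (R : realType) (b : nat) (Di : nat -> {fset int}) : set R :=
  [set x | exists k : nat, (1 <= k)%N /\ exists d : nat -> int,
      (forall i, (1 <= i <= k)%N -> d i \in Di i) /\
      x = ((\sum_(1 <= i < k.+1) (b ^ (i - 1))%:Z * d i)%R)%:~R].

Definition count_full (D : {fset int}) (Di : nat -> {fset int}) (n : nat) : nat :=
  #|[set i : 'I_n.+1 | (1 <= i)%N && (Di i == D)]|.

Definition num_digits (D : {fset int}) : nat := #|` D|%fset.
Arguments Lambda_bD R b Di : clear implicits.

From HB Require Import structures.
From mathcomp Require Import all_boot all_order all_algebra.
From mathcomp Require Import finmap.
From mathcomp Require Import all_classical all_reals all_analysis.
From mathcomp Require Import zify ring lra.
Set Implicit Arguments.
Unset Strict Implicit.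
Unset Printing Implicit Defensive.

Import Order.TTheory GRing.Theory Num.Theory.
Local Open Scope classical_set_scope.
Local Open Scope ring_scope.

(* Write [c n] for the number of indices [i <= n] with [D_i = D], and [N = #D].  The
   digits lie in a window of [b] consecutive integers, so the [N ^ c n] expansions of
   length [n] are distinct integers of modulus less than [b ^ n]: the ball [B(0, b ^ n)]
   holds [N ^ c n] points of [Lambda], which bounds the density from below.  Conversely,
   every point of [Lambda] is [a + b ^ m q] with [a] an expansion of length at most [m],
   and a ball of radius [h <= b ^ m] meets at most two of these translates of each [a],
   so it holds at most [2 (m + 1) N ^ c m] points.  Comparing [N ^ c m] with [h ^ r] for
   [b ^ (m - 1) < h <= b ^ m] shows that [D_r^+(Lambda)] vanishes when [r] exceeds
   [limsup c n / n * log N / log b] and is at least [1] when [r] is below it. *)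

Section esum_one.
Variables (R : realType) (T : choiceType).
Local Open Scope ereal_scope.

Lemma fsbig1_set_seq (s : seq T) : uniq s ->
  \sum_(x \in [set` s]) (1 : \bar R) = (size s)%:R%:E.
Proof.
move=> us; rewrite -fsbig_seq // sumEFin; congr (_%:E).
by rewrite -sum1_size natr_sum.
Qed.

Lemma esum1_le_size (S : set T) (s : seq T) : S `<=` [set` s] ->
  \esum_(y in S) (1 : \bar R) <= (size s)%:R%:E.
Proof.
move=> Ss; apply: ge_ereal_sup => _ [F [finF FS] <-].
apply: (@le_trans _ _ (\sum_(x \in [set` undup s]) (1 : \bar R))).
  apply: lee_fsum_nneg_subset => //.
  by move=> x /set_mem /FS /Ss xs; apply/mem_set; rewrite /= mem_undup.
by rewrite fsbig1_set_seq ?undup_uniq // lee_fin ler_nat size_undup.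
Qed.

Lemma size_le_esum1 (S : set T) (s : seq T) : uniq s -> [set` s] `<=` S ->
  (size s)%:R%:E <= \esum_(y in S) (1 : \bar R).
Proof.
move=> us sS; apply: esum_ge; exists [set` s]; first by split=> //; exact: finite_seq.
by rewrite fsbig1_set_seq.
Qed.

End esum_one.

Section density_criteria.
Variable R : realType.
Implicit Types (Lam : set R) (r s : R).
Local Open Scope ereal_scope.

Lemma upper_density_eq0 r Lam :
  (forall e : R, (0 < e)%R -> exists M : R, forall h x, (M < h)%R ->
     ball_count Lam x h * ((h `^ r)^-1)%:E <= e%:E) ->
  upper_density r Lam = 0.
Proof.
move=> small; rewrite /upper_density; set F := fun h : R => _.
have F0 h : 0 <= F h.
  apply: le_ereal_sup_tmp; exists (ball_count Lam 0 h * ((h `^ r)^-1)%:E); first by exists 0%R.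
  by rewrite mule_ge0 ?esum_ge0 // lee_fin invr_ge0 powR_ge0.
apply/eqP; rewrite eq_le limf_esup_ge0 // andbT; apply/lee_addgt0Pr => e e0.
have [M HM] := small e e0; rewrite add0e; apply: ge_ereal_inf.
exists (ereal_sup (F @` [set h | M < h]%R)).
  by exists [set h | M < h]%R => //; exists M; split => //; exact: num_real.
by apply: ge_ereal_sup => _ [h hh <-]; apply: ge_ereal_sup => _ [x _ <-]; exact: HM.
Qed.

Lemma upper_density_ge (c : R) r Lam :
  (forall M : R, exists h x, (M < h)%R /\ c%:E <= ball_count Lam x h * ((h `^ r)^-1)%:E) ->
  c%:E <= upper_density r Lam.
Proof.
move=> big; apply: le_ereal_inf_tmp => _ [V [M [_ HM]] <-].
have [h [x [Mh hx]]] := big M.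
apply: le_ereal_sup_tmp; eexists; first by exists h; [exact: HM | reflexivity].
by apply: le_ereal_sup_tmp; eexists; first by exists x.
Qed.

Lemma beurling_dim_eq Lam s : (0 <= s)%R ->
  (forall r, (s < r)%R -> upper_density r Lam = 0) ->
  (forall r, (0 < r < s)%R -> upper_density r Lam != 0) ->
  beurling_dim Lam = s%:E.
Proof.
move=> s0 above below; apply/eqP; rewrite eq_le; apply/andP; split.
  apply/lee_addgt0Pr => e e0; rewrite -EFinD; apply: ereal_inf_lbound.
  by exists (s + e)%R => //; split; [lra | apply: above; lra].
apply: le_ereal_inf_tmp => _ [r [r0 hr] <-]; rewrite lee_fin leNgt.
by apply/negP => rs; move: (below r); rewrite r0 rs hr eqxx => /(_ isT).
Qed.

End density_criteria.

Section limn_esup_bounds.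
Variable R : realType.
Implicit Types (u : (\bar R)^nat) (l : \bar R).
Local Open Scope ereal_scope.

Lemma limn_esup_le u l : (forall n, u n <= l) -> limn_esup u <= l.
Proof.
move=> ul; apply: ge_ereal_inf; exists (ereal_sup (u @` setT)).
  by exists setT => //; exact: filterT.
by apply: ge_ereal_sup => _ [n _ <-].
Qed.

Lemma limn_esup_lt_eventually u l : limn_esup u < l -> exists N, forall n, (N <= n)%N -> u n < l.
Proof.
move=> /ereal_inf_lt [_ [V [N _ HN] <-]] hsup; exists N => n Nn.
by apply: le_lt_trans hsup; apply: ereal_sup_ubound; exists n => //; exact: HN.
Qed.

Lemma lt_limn_esup_often u l : l < limn_esup u -> forall N, exists n, (N <= n)%N /\ l < u n.
Proof.
move=> hl N; have : l < ereal_sup (u @` [set n | (N <= n)%N]).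
  apply: lt_le_trans hl _; apply: ereal_inf_lbound.
  by exists [set n | (N <= n)%N] => //; exists N.
by case/ereal_sup_gt => _ [n Nn <-] ?; exists n.
Qed.

End limn_esup_bounds.

Section real_estimates.
Variable R : realType.

Lemma floor_window (B h z : R) (q : int) : 0 < B -> h <= B ->
  `|q%:~R * B - z| < h -> q - Num.floor ((z - h) / B) \in [:: 1; 2].
Proof.
move=> B0 hB; rewrite ltr_norml => /andP[lo hi].
set f := Num.floor _; have /andP[f_le f_gt] := floor_itv ((z - h) / B).
rewrite -/f ler_pdivlMr // in f_le; rewrite -/f ltr_pdivrMr // in f_gt.
have f_lt_q : f < q by rewrite -(ltr_int R) -(ltr_pM2r B0); lra.
have q_lt_f3 : q < f + 3.
  by rewrite -(ltr_int R) -(ltr_pM2r B0) intrD mulrDl; rewrite intrD mulrDl in f_gt; lra.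
by rewrite !inE; lia.
Qed.

Lemma exists_pow_bracket (b : nat) (h : R) : (1 < b)%N -> 1 < h ->
  exists m, [/\ (1 <= m)%N, (b ^ m.-1)%:R < h & h <= (b ^ m)%:R].
Proof.
move=> b1 h1; have ex : exists n, h <= (b ^ n)%:R.
  exists (Num.truncn h).+1; apply/ltW/(lt_le_trans (truncnS_gt _)).
  by rewrite ler_nat ltnW // ltn_expl.
case: (ex_minnP ex) => m hm hmin.
have m1 : (1 <= m)%N by case: m hm {hmin} => [|//]; rewrite expn0 leNgt h1.
exists m; split => //; rewrite ltNge; apply/negP => /hmin; lia.
Qed.

Lemma linear_expRN_small (be e : R) : 0 < be -> 0 < e ->
  exists M : nat, forall m, (M <= m)%N -> m.+1%:R * expR (- (be * m%:R)) <= e.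
Proof.
move=> be0 e0; exists (Num.truncn (4 / (be ^+ 2 * e))).+1 => m hm.
have m1 : 1 <= (m%:R : R) by rewrite ler1n; lia.
have hM : 4 < m%:R * (be ^+ 2 * e).
  rewrite -ltr_pdivrMr ?mulr_gt0 ?exprn_gt0 //.
  by apply: lt_le_trans (truncnS_gt _) _; rewrite ler_nat.
(* [expR x >= x ^ 2 / 2] turns the exponential decay into a [1 / m] decay *)
have hE := expR_ge1Dxn 1 (mulr_ge0 (ltW be0) (ler0n _ m)).
rewrite expRN ler_pdivrMr ?expR_gt0 // mulrS.
rewrite (_ : (2`!)%:R = 2 :> R) // in hE.
move: hM hE m1; move: (m%:R : R) (expR _) => X E hM hE m1.
have h1 := ler_wpM2l (ltW e0) hE.
have h2 : 0 <= X - 1 by lra.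
nra.
Qed.

Lemma natX_div_powR_le (N b k m : nat) (l r h : R) : (0 < N)%N -> (0 < b)%N -> 0 < r ->
  (0 < m)%N -> k%:R <= l * m%:R -> (b ^ m.-1)%:R < h ->
  (N ^ k)%:R / h `^ r <=
  expR (r * ln b%:R) * expR (- ((r * ln b%:R - l * ln N%:R) * m%:R)).
Proof.
move=> N0 b0 r0 m0 kl hh; have h0 : 0 < h by apply: le_lt_trans hh.
have lN0 : 0 <= ln (N%:R : R) by rewrite ln_ge0 // ler1n.
have lnX n (a : nat) : (0 < a)%N -> ln ((a ^ n)%:R : R) = n%:R * ln a%:R.
  by move=> a0; rewrite natrX lnXn ?ltr0n // mulr_natl.
rewrite -[(N ^ k)%:R]lnK ?posrE ?ltr0n ?expn_gt0 ?N0 // lnX //.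
rewrite /powR gt_eqF // -expRN -!expRD ler_expR.
have : (m.-1%:R) * ln (b%:R : R) < ln h.
  by rewrite -lnX // ltr_ln ?posrE ?ltr0n ?expn_gt0 ?b0.
case: m m0 kl hh => [//|m] _ kl hh /=.
have := ler_wpM2r lN0 kl; rewrite -natr1; nra.
Qed.

Lemma powR_le_natX (N b k n : nat) (r : R) : (0 < N)%N -> (0 < b)%N ->
  r * (n%:R * ln b%:R) <= k%:R * ln N%:R -> (b ^ n)%:R `^ r <= (N ^ k)%:R.
Proof.
move=> N0 b0; rewrite !mulr_natl => hle; rewrite /powR gt_eqF ?ltr0n ?expn_gt0 ?b0 //.
rewrite -[(N ^ k)%:R]lnK ?posrE ?ltr0n ?expn_gt0 ?N0 // ler_expR.
by rewrite !natrX !lnXn ?ltr0n.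
Qed.

Lemma exists_gt_mul_lt (f t r : R) : 0 <= t -> f * t < r -> exists2 l, f < l & l * t < r.
Proof.
move=> t0 ftr; pose d := (r - f * t) / (t + 1).
have dt : d * (t + 1) = r - f * t by rewrite divfK // lt0r_neq0 // ltr_wpDl.
have d0 : 0 < d by rewrite divr_gt0 ?subr_gt0 // ltr_wpDl.
by exists (f + d); [rewrite ltrDl | nra].
Qed.

Lemma exists_lt_mul_gt (f t r : R) : 0 <= t -> 0 < r -> r < f * t ->
  exists l, [/\ 0 < l, l < f & r < l * t].
Proof.
move=> t0 r0 rft; have {t0} t0 : 0 < t.
  by rewrite lt_def t0 andbT; apply: contraTneq rft => ->; rewrite mulr0 -leNgt ltW.
have rtf : r / t < f by rewrite ltr_pdivrMr.
have rt0 : 0 < r / t by exact: divr_gt0.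
by exists ((r / t + f) / 2); split; [lra | lra | rewrite -ltr_pdivrMr //; lra].
Qed.

End real_estimates.

Section count_full.
Variables (D : {fset int}) (Di : nat -> {fset int}).

Lemma count_fullE n :
  count_full D Di n = (\sum_(0 <= i < n.+1) ((0 < i)%N && (Di i == D)))%N.
Proof.
rewrite /count_full -sum1_card big_mkord big_mkcond /=.
apply: eq_bigr => i _.
case: (boolP ((0 < i)%N && _)) => H; first by rewrite mem_set.
by rewrite memNset //; apply/negP.
Qed.

Lemma count_fullS n : count_full D Di n.+1 = (count_full D Di n + (Di n.+1 == D))%N.
Proof. by rewrite !count_fullE big_nat_recr. Qed.

Lemma leq_count_full m n : (m <= n)%N -> (count_full D Di m <= count_full D Di n)%N.
Proof.
move=> /subnK <-; elim: (n - m)%N => [|k IH] //.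
by rewrite addSn count_fullS (leq_trans IH) ?leq_addr.
Qed.

Lemma count_full_le n : (count_full D Di n <= n)%N.
Proof.
elim: n => [|n IH]; first by rewrite count_fullE big_nat1.
by rewrite count_fullS; case: (_ == _) => /=; lia.
Qed.

End count_full.

Section digit_sums.
Variables (b : nat) (Di : nat -> {fset int}).

Definition digit_sum (d : nat -> int) (k : nat) : int :=
  \sum_(1 <= i < k.+1) (b ^ (i - 1))%:Z * d i.

Fixpoint digit_sums (k : nat) : seq int :=
  if k is k'.+1 then [seq p + (b ^ k')%:Z * e | p <- digit_sums k', e <- enum_fset (Di k)]
  else [:: 0].

Lemma digit_sumS d k : digit_sum d k.+1 = digit_sum d k + (b ^ k)%:Z * d k.+1.
Proof. by rewrite /digit_sum big_nat_recr //= subn1. Qed.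

Lemma digit_sumsP k p : p \in digit_sums k <->
  exists d, (forall i, (1 <= i <= k)%N -> d i \in Di i) /\ p = digit_sum d k.
Proof.
elim: k p => [|k IH] p /=.
  rewrite inE; split=> [/eqP ->|[d [_ ->]]]; last by rewrite /digit_sum big_geq.
  by exists (fun=> 0); split=> [i|]; [lia | rewrite /digit_sum big_geq].
split=> [/allpairsP [[p' e] /= [/IH [d [Hd ->]] He ->]] | [d [Hd ->]]].
  exists (fun i => if i == k.+1 then e else d i); split.
    by move=> i /andP[i1 ik]; case: eqP => [-> //|/eqP ne]; apply: Hd; lia.
  rewrite digit_sumS eqxx; congr (_ + _); apply: eq_big_nat => i /andP[_ ik].
  by rewrite ifF //; apply/eqP; lia.
rewrite digit_sumS; apply: (allpairs_f (fun p e => p + (b ^ k)%:Z * e)).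
  by apply/IH; exists d; split=> // i ik; apply: Hd; lia.
by apply: Hd; rewrite /= leqnn.
Qed.

End digit_sums.

Section Lambda_counting.
Variables (b : nat) (D : {fset int}) (Di : nat -> {fset int}).
Hypothesis hb : (2 <= b)%N.
Hypothesis hD : forall d, d \in D -> (- (b %/ 2)%:Z <= d) && (d <= (b - 1)%:Z - (b %/ 2)%:Z).
Hypothesis hDi : forall i, (1 <= i)%N -> Di i = D \/ Di i = [fset (0 : int)]%fset.

Local Notation u := (b %/ 2)%:Z.

Let half_le_pred : (b %/ 2 <= b - 1)%N. Proof. lia. Qed.

Lemma size_digit_sums k : size (digit_sums b Di k) = (#|` D| ^ count_full D Di k)%N.
Proof.
elim: k => [|k IH] /=; first by rewrite count_fullE big_nat1.
rewrite size_allpairs IH count_fullS -/(#|` Di k.+1|%fset).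
case: (hDi (ltn0Sn k)) => ->; first by rewrite eqxx addn1 expnS mulnC.
rewrite cardfs1 muln1; case: eqP => [<-|_]; last by rewrite addn0.
by rewrite cardfs1 !exp1n.
Qed.

Lemma digit_window i d : (1 <= i)%N -> d \in Di i -> - u <= d <= (b - 1)%:Z - u.
Proof.
move=> i1; case: (hDi i1) => -> hd; first exact: hD.
by move: hd half_le_pred; rewrite inE => /eqP ->; lia.
Qed.

Lemma digit_sums_window k p : p \in digit_sums b Di k ->
  - u * ((b ^ k)%:Z - 1) <= (b - 1)%:Z * p <= ((b - 1)%:Z - u) * ((b ^ k)%:Z - 1).
Proof.
elim: k p => [|k IH] p /=.
  by rewrite inE => /eqP ->; rewrite expn0 subrr !mulr0 lexx.
case/allpairsP => -[p' e] /= [/IH hp' /(digit_window (ltn0Sn k)) he ->].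
have : (1 <= b ^ k)%N by rewrite expn_gt0; lia.
move: hp' he half_le_pred; rewrite expnS PoszM; move: (b ^ k)%N (b %/ 2)%N => B U; nia.
Qed.

Lemma digit_sums_abs_lt k p : p \in digit_sums b Di k -> `|p| < (b ^ k)%:Z.
Proof.
move=> /digit_sums_window; move: half_le_pred.
rewrite ltr_norml; move: (b ^ k)%N (b %/ 2)%N => B U; nia.
Qed.

Lemma digit_sums_dist_lt k p p' : p \in digit_sums b Di k -> p' \in digit_sums b Di k ->
  `|p - p'| < (b ^ k)%:Z.
Proof.
move=> /digit_sums_window hp /digit_sums_window hp'.
rewrite ltr_norml; move: hp hp' half_le_pred; move: (b ^ k)%N (b %/ 2)%N => B U; nia.
Qed.

Lemma uniq_digit_sums k : uniq (digit_sums b Di k).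
Proof.
elim: k => [|k IH] //=; apply: allpairs_uniq => //; first exact: fset_uniq.
move=> [p e] [p' e'] /allpairsP [[p1 e1] /= [h1 _ [-> ->]]].
move=> /allpairsP [[p2 e2] /= [h2 _ [-> ->]]] /= E.
have B0 : (0 < b ^ k)%N by rewrite expn_gt0; lia.
have := digit_sums_dist_lt h1 h2.
have -> : p1 - p2 = (b ^ k)%:Z * (e2 - e1) by rewrite mulrBr; lia.
move: (b ^ k)%N B0 => B B0 lt_B.
suff e12 : e1 = e2 by move: E; rewrite e12 => /addIr ->.
nia.
Qed.

Definition short_sums m := flatten [seq digit_sums b Di j | j <- iota 0 m.+1].

Hypothesis hD0 : D != fset0.

Lemma size_short_sums m : (size (short_sums m) <= m.+1 * #|` D| ^ count_full D Di m)%N.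
Proof.
rewrite /short_sums size_flatten /shape -map_comp sumnE big_map -/(index_iota 0 m.+1).
rewrite -[X in (_ <= X * _)%N](subn0 m.+1) -sum_nat_const_nat big_seq_cond.
rewrite [X in (_ <= X)%N]big_seq_cond; apply: leq_sum => j.
rewrite mem_index_iota andbT => /andP[_ jm] /=.
rewrite size_digit_sums leq_pexp2l ?lt0n ?cardfs_eq0 //.
by apply: leq_count_full; lia.
Qed.

Lemma digit_sum_split m k d : (forall i, (1 <= i <= k)%N -> d i \in Di i) ->
  exists a q, a \in short_sums m /\ digit_sum b d k = a + (b ^ m)%:Z * q.
Proof.
move=> Hd; have [km|mk] := leqP k m.
  exists (digit_sum b d k), 0; rewrite mulr0 addr0; split => //.
  apply/flatten_mapP; exists k; first by rewrite mem_iota; lia.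
  by apply/digit_sumsP; exists d.
exists (digit_sum b d m), (\sum_(m.+1 <= i < k.+1) (b ^ (i - 1 - m))%:Z * d i); split.
  apply/flatten_mapP; exists m; first by rewrite mem_iota; lia.
  by apply/digit_sumsP; exists d; split=> // i im; apply: Hd; lia.
rewrite /digit_sum (big_cat_nat (n := m.+1)) //; last by lia.
congr (_ + _); rewrite mulr_sumr; apply: eq_big_nat => i im.
by rewrite mulrA -PoszM -expnD; congr ((b ^ _)%:Z * _); lia.
Qed.

Lemma ball_count_Lambda_le (R : realType) m (x h : R) : 0 < h -> h <= (b ^ m)%:R ->
  (ball_count (Lambda_bD R b Di) x h <=
   (2 * (m.+1 * #|` D| ^ count_full D Di m))%:R%:E)%E.
Proof.
move=> h0 hB; set B := (b ^ m)%N.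
have B0 : 0 < (B%:R : R) by rewrite ltr0n expn_gt0; lia.
pose f (a : int) := Num.floor ((x - a%:~R - h) / B%:R).
pose s := [seq (a + B%:Z * (f a + j))%:~R : R | a <- short_sums m, j <- [:: 1; 2]].
apply: (@le_trans _ _ (size s)%:R%:E); last first.
  by rewrite lee_fin ler_nat size_allpairs mulnC leq_mul2l size_short_sums.
apply: esum1_le_size => _ [[k [_ [d [Hd ->]]]] /=]; rewrite -/(digit_sum b d k).
have [a [q [ha ->]]] := digit_sum_split m Hd.
move=> near; have : `|q%:~R * B%:R - (x - a%:~R)| < h.
  by move: near; rewrite intrD intrM -[((B%:Z)%:~R)]/(B%:R : R) addrAC mulrC -opprB addrC.
move=> /(floor_window B0 hB) qj; apply/allpairsP; exists (a, q - f a); split => //=.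
by congr (_%:~R); rewrite /f; ring.
Qed.

Lemma ball_count_Lambda_ge (R : realType) n : (1 <= n)%N ->
  ((#|` D| ^ count_full D Di n)%:R%:E <= ball_count (Lambda_bD R b Di) 0 (b ^ n)%:R)%E.
Proof.
move=> n1; rewrite -size_digit_sums -(size_map (intr : int -> R)).
apply: size_le_esum1; first by rewrite (map_inj_uniq intr_inj) uniq_digit_sums.
move=> _ /mapP [p hp ->]; split.
  by have [d [Hd ->]] := (digit_sumsP _ _ _ _).1 hp; exists n; split => //; exists d.
by rewrite /= subr0 -intr_norm -[(b ^ n)%:R]/(((b ^ n)%:Z)%:~R) ltr_int digit_sums_abs_lt.
Qed.

Lemma upper_density_Lambda_eq0 (R : realType) (r l : R) n0 : 0 < r ->
  (forall n, (n0 <= n)%N -> (count_full D Di n)%:R <= l * n%:R) ->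
  l * ln #|` D|%:R < r * ln b%:R ->
  upper_density r (Lambda_bD R b Di) = 0%E.
Proof.
move=> r0 hc hlr; apply: upper_density_eq0 => e e0.
have N0 : (0 < #|` D|)%N by rewrite lt0n cardfs_eq0.
pose C := 2 * expR (r * ln b%:R); have C0 : 0 < C by rewrite mulr_gt0 ?expR_gt0.
pose be := r * ln b%:R - l * ln #|` D|%:R; have be0 : 0 < be by rewrite subr_gt0.
have [M HM] := linear_expRN_small be0 (divr_gt0 e0 C0).
exists (b ^ maxn M n0)%:R => h x hh.
have h1 : 1 < h by apply: le_lt_trans hh; rewrite ler1n expn_gt0; lia.
have [m [m1 hm1 hm2]] := exists_pow_bracket hb h1.
have Mm : (maxn M n0 < m)%N by rewrite -(ltn_exp2l _ _ hb) -(ltr_nat R) (lt_le_trans hh).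
apply: le_trans (lee_wpmul2r _ (ball_count_Lambda_le x (lt_trans ltr01 h1) hm2)) _.
  by rewrite lee_fin invr_ge0 powR_ge0.
have ratio_le := natX_div_powR_le N0 (ltnW hb) r0 m1 (hc m (leq_trans (leq_maxr _ _) (ltnW Mm))) hm1.
rewrite -/be in ratio_le; rewrite -EFinM lee_fin !natrM -!mulrA.
apply: (le_trans (ler_wpM2l _ (ler_wpM2l _ ratio_le))) => //.
have -> : 2 * (m.+1%:R * (expR (r * ln b%:R) * expR (- (be * m%:R)))) =
          m.+1%:R * expR (- (be * m%:R)) * C by rewrite /C; ring.
by rewrite -[e](divfK (lt0r_neq0 C0)) ler_wpM2r ?(ltW C0) // HM //; lia.
Qed.

Lemma upper_density_Lambda_ge1 (R : realType) (r l : R) : 0 < r ->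
  r * ln b%:R < l * ln #|` D|%:R ->
  (forall n0, exists n, (n0 <= n)%N /\ l * n%:R < (count_full D Di n)%:R) ->
  (1 <= upper_density r (Lambda_bD R b Di))%E.
Proof.
move=> r0 hlr hc; apply: upper_density_ge => M.
have N0 : (0 < #|` D|)%N by rewrite lt0n cardfs_eq0.
have lN0 : 0 <= ln (#|` D|%:R : R) by rewrite ln_ge0 // ler1n.
have [n [Mn hn]] := hc (Num.truncn M).+1.
exists (b ^ n)%:R, 0; split.
  apply: lt_le_trans (truncnS_gt _) _; rewrite ler_nat.
  by apply: leq_trans Mn _; apply/ltnW/ltn_expl.
apply: le_trans (lee_wpmul2r _ (ball_count_Lambda_ge R (leq_trans _ Mn))) => //.
rewrite -EFinM lee_fin ler_pdivlMr ?powR_gt0 ?ltr0n ?expn_gt0 1?ltnW // mul1r.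
apply: powR_le_natX => //; first exact: ltnW.
have := ler_wpM2r lN0 (ltW hn); have := ler_wpM2r (ler0n R n) (ltW hlr); nra.
Qed.

End Lambda_counting.

Section full_frequency.
Variables (R : realType) (D : {fset int}) (Di : nat -> {fset int}).
Local Notation freq := (fun n : nat => ((count_full D Di n)%:R / n%:R : R)%:E).

Lemma freq_ge0 n : (0 <= freq n)%E.
Proof. by rewrite lee_fin divr_ge0. Qed.

Lemma freq_le1 n : (freq n <= 1)%E.
Proof.
rewrite lee_fin; have [->|n0] := posnP n; first by rewrite invr0 mulr0.
by rewrite ler_pdivrMr ?ltr0n // mul1r ler_nat count_full_le.
Qed.

Lemma limn_esup_freq_ge0 : (0 <= limn_esup freq)%E.
Proof. by apply: limf_esup_ge0 => [|n]; [exact: filter_not_empty | exact: freq_ge0]. Qed.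

Lemma limn_esup_freq_fin_num : limn_esup freq \is a fin_num.
Proof.
rewrite ge0_fin_numE ?limn_esup_freq_ge0 // (@le_lt_trans _ _ 1%E) ?ltey //.
by apply: limn_esup_le => n; exact: freq_le1.
Qed.

Lemma count_full_le_eventually (l : R) : (limn_esup freq < l%:E)%E ->
  exists n0, forall n, (n0 <= n)%N -> (count_full D Di n)%:R <= l * n%:R.
Proof.
move=> /limn_esup_lt_eventually [n0 hn0]; exists n0 => n /hn0; rewrite lte_fin.
have [->|n0'] := posnP n; last by rewrite ltr_pdivrMr ?ltr0n // => /ltW.
by have := count_full_le D Di 0; rewrite leqn0 => /eqP -> _; rewrite mulr0.
Qed.

Lemma count_full_gt_often (l : R) : 0 < l -> (l%:E < limn_esup freq)%E ->
  forall n0, exists n, (n0 <= n)%N /\ l * n%:R < (count_full D Di n)%:R.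
Proof.
move=> l0 /lt_limn_esup_often often n0; have [n [n0n]] := often n0.
rewrite lte_fin; have [->|n_gt0] := posnP n.
  by rewrite invr0 mulr0 => /(lt_trans l0); rewrite ltxx.
by rewrite ltr_pdivlMr ?ltr0n // => ?; exists n.
Qed.

End full_frequency.

Theorem lemma5p2 (R : realType) (b : nat) (D : {fset int}) (Di : nat -> {fset int})
  (hb : (2 <= b)%N)
  (hD0 : D != fset0)
  (hD : forall d, d \in D -> (- (b %/ 2)%:Z <= d) && (d <= (b - 1)%:Z - (b %/ 2)%:Z))
  (hDi : forall i, (1 <= i)%N -> Di i = D \/ Di i = [fset (0 : int)]%fset) :
  beurling_dim (Lambda_bD R b Di) =
  (limn_esup (fun n : nat => ((count_full D Di n)%:R / n%:R : R)%:E) *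
   (ln ((num_digits D)%:R : R) / ln (b%:R : R))%:E)%E.
Proof.
rewrite /num_digits; set L := limn_esup _.
have L0 : (0 <= L)%E := limn_esup_freq_ge0 R D Di.
have /fineK LE := limn_esup_freq_fin_num R D Di; rewrite -/L in LE.
set f := fine L in LE; have f0 : 0 <= f by rewrite -lee_fin LE.
set lN := ln (#|` D|%:R : R); set lb := ln (b%:R : R).
have lb0 : 0 < lb by rewrite ln_gt0 // ltr1n.
have lN0 : 0 <= lN by rewrite ln_ge0 // ler1n lt0n cardfs_eq0.
set t := lN / lb; have t0 : 0 <= t by exact: divr_ge0 lN0 (ltW lb0).
have lNt : lN = t * lb by rewrite divfK ?lt0r_neq0.
rewrite -LE -EFinM; apply: beurling_dim_eq => [|r fr|r /andP[r0 rf]]; first exact: mulr_ge0.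
- have [l fl lr] := exists_gt_mul_lt t0 fr.
  have [n0 hn0] : exists n0, forall n, (n0 <= n)%N -> (count_full D Di n)%:R <= l * n%:R.
    by apply: count_full_le_eventually; rewrite -/L -LE lte_fin.
  apply: (upper_density_Lambda_eq0 hb hDi hD0 _ hn0); first by nra.
  by rewrite -/lN -/lb lNt mulrA ltr_pM2r.
- have [l [l0 lf rl]] := exists_lt_mul_gt t0 r0 rf.
  have rl' : r * lb < l * lN by rewrite lNt mulrA ltr_pM2r.
  have lL : (l%:E < L)%E by rewrite -LE lte_fin.
  have := upper_density_Lambda_ge1 hb hD hDi hD0 r0 rl' (count_full_gt_often l0 lL).
  by apply: contraTneq => ->; rewrite lee_fin ler10.
Qed.
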